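(* Let $(W,S)$ be a finitely generated Coxeter system and $u\le v$ in $(W,\le)$. The Möbius function of $(W,\le)$ satisfies $$\mu(u,v)=\begin{cases}(-1)^{|S(v)|-|S(u)|}&\text{if } S(u)=S(v)\setminus \mathrm{Des}(v^{S(u)})\text{ or } u=v,\\ 0&\text{otherwise.}\end{cases}$$ In particular, for every $v\in W$, $\mu(e,v)=(-1)^{|S(v)|}$ if $W_{S(v)}$ is finite and $v=w_0(S(v))$, and $\mu(e,v)=0$ otherwise.
   Context: $(W,S)$ is a finitely generated Coxeter system with length function $\ell$ and identity $e$. For $w\in W$, $S(w)\subseteq S$ is the set of simple reflections appearing in a (any) reduced expression of $w$; $\mathrm{Des}(w)=\{s\in S:\ell(ws)<\ell(w)\}$. For $I\subseteq S$, $W_I$ is the parabolic subgroup generated by $I$, $X_I=\{u\in W:\ell(us)>\ell(u)\ \forall s\in I\}$, and every $w\in W$ factors uniquely as $w=w^Iw_I$ with $w^I\in X_I$, $w_I\in W_I$ (parabolic components along $I$). The partial order on $W$: $u\le v$ if and only if $v_{S(u)}=u$. For $K\subseteq S$ with $W_K$ finite, $w_0(K)$ denotes the unique element of maximal length in $W_K$. *)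

From HB Require Import structures.
From mathcomp Require Import all_boot all_order all_algebra.
From mathcomp Require Import boolp.
From Stdlib Require Import ClassicalEpsilon.
From Stdlib Require List.

Set Implicit Arguments.
Unset Strict Implicit.
Unset Printing Implicit Defensive.

Import GRing.Theory.
Local Open Scope ring_scope.

Record group := Group {
  gcar :> Type;
  gmul : gcar -> gcar -> gcar;
  gone : gcar;
  ginv : gcar -> gcar;
  gmulA : forall x y z, gmul x (gmul y z) = gmul (gmul x y) z;
  gmul1g : forall x, gmul gone x = x;
  gmulVg : forall x, gmul (ginv x) x = gone
}.

Fixpoint gpow (G : group) (x : G) (n : nat) : G :=
  match n with 0 => gone G | S k => gmul x (gpow x k) end.

Definition group_hom (G H : group) (phi : G -> H) : Prop :=
  forall x y, phi (gmul x y) = gmul (phi x) (phi y).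

Section Coxeter.
Variables (T : finType) (W : group) (gen : T -> W).
(* The set of simple reflections S is the image of the injective map gen;
   subsets of S are represented by {set T}. *)

Definition prodw (ws : seq T) : W :=
  foldr (fun s acc => gmul (gen s) acc) (gone W) ws.

(* (W,S) is a Coxeter system: S consists of distinct involutions generating W,
   and W has the presentation <S | (st)^{m(s,t)} = 1>, where m(s,t) is the
   order of st in W (relations (st)^n = 1 for every n with (st)^n = 1 in W). *)
Definition coxeter_system : Prop :=
  [/\ injective gen,
      (forall s, gmul (gen s) (gen s) = gone W /\ gen s <> gone W),
      (forall w : W, exists ws, prodw ws = w) &
      (forall (G : group) (f : T -> G),
          (forall s t n, gpow (gmul (gen s) (gen t)) n = gone W ->
                         gpow (gmul (f s) (f t)) n = gone G) ->
          exists phi : W -> G, group_hom phi /\ forall s, phi (gen s) = f s)].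

Definition reduced (ws : seq T) : Prop :=
  forall ws', prodw ws' = prodw ws -> (size ws <= size ws')%N.

Definition is_length (w : W) (n : nat) : Prop :=
  exists ws, prodw ws = w /\ reduced ws /\ size ws = n.

Definition len (w : W) : nat := epsilon (inhabits 0%N) (is_length w).

Definition supp (w : W) : {set T} :=
  [set s | `[< exists ws, prodw ws = w /\ reduced ws /\ s \in ws >] ].

Definition Des (w : W) : {set T} :=
  [set s | `[< (len (gmul w (gen s)) < len w)%N >] ].

Definition inW (I : {set T}) (w : W) : Prop :=
  exists ws, all (fun s => s \in I) ws /\ prodw ws = w.

(* minimal coset representatives X_I *)
Definition inX (I : {set T}) (u : W) : Prop :=
  forall s, s \in I -> (len u < len (gmul u (gen s)))%N.

Definition parab (I : {set T}) (w : W) : W * W :=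
  epsilon (inhabits (w, w))
    (fun p => w = gmul p.1 p.2 /\ inX I p.1 /\ inW I p.2).

Definition comp_up (I : {set T}) (w : W) : W := (parab I w).1.
Definition comp_low (I : {set T}) (w : W) : W := (parab I w).2.

Definition cox_le (u v : W) : Prop := comp_low (supp u) v = u.

(* the Möbius function of (W, <=), characterized by its defining recursion:
   mu(u,u) = 1, mu(u,v) = 0 unless u <= v, and for u < v the interval [u,v]
   is finite and sum_{u <= z <= v} mu(u,z) = 0. *)
Definition is_mobius (mu : W -> W -> int) : Prop :=
  forall u v,
    (u = v -> mu u v = 1) /\
    (~ cox_le u v -> mu u v = 0) /\
    (cox_le u v -> u <> v ->
       exists s : seq W, List.NoDup s /\
         (forall z, List.In z s <-> cox_le u z /\ cox_le z v) /\
         \sum_(z <- s) mu u z = 0).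

Definition mobius : W -> W -> int :=
  epsilon (inhabits (fun _ _ => 0)) is_mobius.

Definition finite_parab (K : {set T}) : Prop :=
  exists s : seq W, forall w, inW K w -> List.In w s.

Definition is_w0 (K : {set T}) (w : W) : Prop :=
  inW K w /\ forall x, inW K x -> (len x <= len w)%N.

End Coxeter.

From Pilot Require Import Defs.
From HB Require Import structures.
From mathcomp Require Import all_boot all_order all_algebra.
From mathcomp Require Import boolp zify.
From Stdlib Require Import ClassicalEpsilon.
From Stdlib Require List Permutation.

Set Implicit Arguments.
Unset Strict Implicit.
Unset Printing Implicit Defensive.

Import GRing.Theory.

(* Write K = S(u) and v = x u with x = v^K.  For K <= J <= S(v) the component
   v_J factors as x_J u, and the elements of the interval [u, v] are exactly
   the v_J with S(v_J) = J, which happens iff J \ K consists of descents of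
   x_J; this is also the case distinction of the formula.  Expanding the
   indicator of J \ K <= Des(x_J) as an alternating sum over the subsets N of
   J \ K avoiding Des(x_J), i.e. avoiding Des(x), and exchanging the sums,
   toggling a fixed t in Des(x) \ K (there is one when u <> v) is a
   sign-reversing involution: the formula satisfies the recursion defining mu.
   For u = e the condition reads S(v) <= Des(v); by the lifting property every
   element of W_S(v) then lies Bruhat-below v, so lengths in W_S(v) are
   bounded by l(v), W_S(v) is finite and v is its longest element.
   The exchange condition, on which all of this rests, is derived from the
   Coxeter presentation through Tits' reflection cocycle. *)

Section GroupFacts.
Variable G : group.
Local Notation "x ** y" := (gmul x y) (at level 40, left associativity).
Local Notation one := (gone G).
Implicit Types x y z : G.

Lemma gmulgV x : x ** ginv x = one.
Proof.
have e1 : ginv (ginv x) ** ginv x = one by rewrite gmulVg.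
by rewrite -[x ** _]gmul1g -e1 -gmulA (gmulA (ginv x)) gmulVg gmul1g e1.
Qed.

Lemma gmulg1 x : x ** one = x.
Proof. by rewrite -(gmulVg x) gmulA gmulgV gmul1g. Qed.

Lemma gmulKg x y : ginv x ** (x ** y) = y.
Proof. by rewrite gmulA gmulVg gmul1g. Qed.

Lemma gmulKVg x y : x ** (ginv x ** y) = y.
Proof. by rewrite gmulA gmulgV gmul1g. Qed.

Lemma gmulgK x y : x ** y ** ginv y = x.
Proof. by rewrite -gmulA gmulgV gmulg1. Qed.

Lemma gmulgKV x y : x ** ginv y ** y = x.
Proof. by rewrite -gmulA gmulVg gmulg1. Qed.

Lemma gmulgI x : injective (gmul x).
Proof. by move=> y z e; rewrite -(gmulKg x y) e gmulKg. Qed.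

Lemma gmulIg y : injective (fun x => x ** y).
Proof. by move=> x z e; rewrite -(gmulgK x y) /= e gmulgK. Qed.

Lemma ginv_unique x y : x ** y = one -> y = ginv x.
Proof. by move=> e; apply: (@gmulgI x); rewrite e gmulgV. Qed.

Lemma ginvK : involutive (@ginv G).
Proof. by move=> x; symmetry; apply: ginv_unique; rewrite gmulVg. Qed.

Lemma ginvM x y : ginv (x ** y) = ginv y ** ginv x.
Proof. by symmetry; apply: ginv_unique; rewrite -gmulA gmulKVg gmulgV. Qed.

Lemma ginv1 : ginv one = one.
Proof. by symmetry; apply: ginv_unique; rewrite gmul1g. Qed.

Lemma gpowD x m n : gpow x (m + n) = gpow x m ** gpow x n.
Proof. by elim: m => [|m IH] /=; rewrite ?gmul1g // IH gmulA. Qed.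

Lemma gpowSr x n : gpow x n.+1 = gpow x n ** x.
Proof. by rewrite -addn1 gpowD /= gmulg1. Qed.

Lemma gpowV x n : gpow (ginv x) n = ginv (gpow x n).
Proof. by elim: n => [|n IH] /=; rewrite ?ginv1 // IH -ginvM -gpowSr. Qed.

Lemma gmul_gpowC x y n : x ** gpow (y ** x) n = gpow (x ** y) n ** x.
Proof.
elim: n => [|n IH] /=; first by rewrite gmul1g gmulg1.
by rewrite !gmulA -(gmulA (x ** y) x) IH gmulA.
Qed.

End GroupFacts.

Lemma group_hom1 (G H : group) (phi : G -> H) : group_hom phi -> phi (gone G) = gone H.
Proof. by move=> hom; apply: (@gmulgI _ (phi (gone G))); rewrite -hom gmul1g gmulg1. Qed.

Section SymmetricGroup.
Variable X : Type.

Record bijection := Bijection {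
  bij_fun : X -> X;
  bij_inv : X -> X;
  bij_funK : cancel bij_fun bij_inv;
  bij_invK : cancel bij_inv bij_fun }.

Lemma bij_ext (p q : bijection) : bij_fun p =1 bij_fun q -> p = q.
Proof.
case: p q => f g fK gK [f' g' fK' gK'] /= /funext ef; subst f'.
have eg : g = g' by apply: funext => x; rewrite -{2}(gK x) fK'.
subst g'; by rewrite (Prop_irrelevance fK fK') (Prop_irrelevance gK gK').
Qed.

Definition bij_comp (p q : bijection) : bijection.
refine (@Bijection (bij_fun p \o bij_fun q) (bij_inv q \o bij_inv p) _ _).
- by move=> x /=; rewrite !bij_funK.
- by move=> x /=; rewrite !bij_invK.
Defined.

Definition sym_group : group.
refine (@Defs.Group bijection bij_comp
  (@Bijection id id (fun _ => erefl) (fun _ => erefl))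
  (fun p => @Bijection (bij_inv p) (bij_fun p) (bij_invK p) (bij_funK p)) _ _ _).
- by move=> p q r; apply: bij_ext.
- by move=> p; apply: bij_ext.
- by move=> p; apply: bij_ext => x /=; rewrite bij_funK.
Defined.

Lemma bij_fun_gpow (p : sym_group) n x : bij_fun (gpow p n) x = iter n (bij_fun p) x.
Proof. by elim: n => //= n <-. Qed.

End SymmetricGroup.

Section SignedSubsetSums.
Variable T : finType.
Implicit Types C D J K N V : {set T}.
Local Open Scope ring_scope.

Definition toggle (t : T) J := if t \in J then J :\ t else t |: J.

Lemma toggleK t : involutive (toggle t).
Proof.
move=> J; rewrite {2}/toggle; case: ifP => tJ; rewrite /toggle.
  by rewrite setD11 setD1K.
by rewrite setU11 setU1K ?tJ.
Qed.

Lemma in_toggle t J y : (y \in toggle t J) = (if y == t then t \notin J else y \in J).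
Proof.
by rewrite /toggle; case: ifP => tJ; rewrite !inE; case: eqP => [->|] //=; rewrite tJ.
Qed.

Lemma sign_toggle t J : (-1) ^+ #|toggle t J| = - (-1) ^+ #|J| :> int.
Proof.
rewrite /toggle; case: ifP => tJ.
  by rewrite [in RHS](cardsD1 t J) tJ add1n exprS mulN1r opprK.
by rewrite cardsU1 tJ add1n exprS mulN1r.
Qed.

Lemma toggle_setD t J K : t \notin K -> toggle t J :\: K = toggle t (J :\: K).
Proof.
move=> tK; apply/setP => y; rewrite !inE !in_toggle !inE.
by case: eqP => [->|] //=; rewrite (negbTE tK).
Qed.

Lemma subset_toggle t J N : t \notin N -> (N \subset toggle t J) = (N \subset J).
Proof.
move=> tN; apply/subsetP/subsetP => sub y yN; have := sub y yN; rewrite ?in_toggle.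
  by case: eqP => [ety|//]; move: tN; rewrite -ety yN.
by case: eqP => [ety|//]; move: tN; rewrite -ety yN.
Qed.

Lemma toggle_subset t J V : t \in V -> (toggle t J \subset V) = (J \subset V).
Proof.
move=> tV; apply/subsetP/subsetP => sub y.
  by move=> yJ; case: (eqVneq y t) => [->//|ne]; apply: sub; rewrite in_toggle (negbTE ne).
by rewrite in_toggle; case: eqP => [->//|_]; apply: sub.
Qed.

Lemma sum_toggle_eq0 (P : pred {set T}) (f : {set T} -> int) t :
  (forall J, P (toggle t J) = P J) -> (forall J, P J -> f (toggle t J) = - f J) ->
  \sum_(J | P J) f J = 0.
Proof.
move=> Ptog ftog; set S := \sum_(J | P J) f J.
have : S = - S.
  rewrite /S -sumrN (reindex_inj (can_inj (toggleK t))) /=.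
  by apply: eq_big => J; rewrite ?Ptog // => PJ; rewrite ftog.
lia.
Qed.

Lemma sum_sign_subsets C :
  \sum_(N : {set T} | N \subset C) (-1) ^+ #|N| = (C == set0)%:R :> int.
Proof.
have [->|[t tC]] := set_0Vmem C.
  rewrite eqxx (eq_bigl (pred1 set0)) => [|N]; last by rewrite subset0.
  by rewrite big_pred1_eq cards0.
have -> : (C == set0) = false by apply/negP => /eqP C0; rewrite C0 inE in tC.
by apply: (sum_toggle_eq0 (t := t)) => J; rewrite ?toggle_subset ?sign_toggle.
Qed.

Lemma sign_subsetD_indicator J K D :
  (if J :\: K \subset D then (-1) ^+ #|J :\: K| else 0) =
  \sum_(N : {set T} | N \subset (J :\: K) :\: D) (-1) ^+ (#|J :\: K| + #|N|) :> int.
Proof.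
under eq_bigr do rewrite exprD.
by rewrite -mulr_sumr sum_sign_subsets setD_eq0; case: ifP; rewrite ?mulr1 ?mulr0.
Qed.

(* Used with [J] ranging over the supports of the elements of an interval and
   [D J] the descent set of the corresponding minimal coset representative. *)
Lemma sum_sign_descent_sets_eq0 K V (D : {set T} -> {set T}) (Dx : {set T}) t :
  (forall J N, K \subset J -> J \subset V -> N \subset J :\: K ->
     [disjoint N & D J] = [disjoint N & Dx]) ->
  t \in Dx -> t \in V -> t \notin K ->
  \sum_(J : {set T}) (if [&& K \subset J, J \subset V & J :\: K \subset D J]
          then (-1) ^+ #|J :\: K| else 0) = 0 :> int.
Proof.
move=> Ddisj tD tV tK.
pose P J N := [&& K \subset J, J \subset V, N \subset J :\: K & [disjoint N & Dx]].
have expand J : (if [&& K \subset J, J \subset V & J :\: K \subset D J]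
                 then (-1) ^+ #|J :\: K| else 0)
    = \sum_(N : {set T} | P J N) (-1) ^+ (#|J :\: K| + #|N|) :> int.
  rewrite /P; case: (K \subset J) / idP => KJ /=; last by rewrite big_pred0_eq.
  case: (J \subset V) / idP => JV /=; last by rewrite big_pred0_eq.
  rewrite sign_subsetD_indicator; apply: eq_bigl => N; rewrite subsetD.
  by case NJK: (N \subset J :\: K) => //=; apply: Ddisj.
rewrite (eq_bigr _ (fun J _ => expand J)).
rewrite (@exchange_big_dep _ _ _ _ _ _ _ xpredT P xpredT) //=.
apply: big1 => N _; have [Ndisj|Nmeet] := boolP [disjoint N & Dx]; last first.
  by apply: big_pred0 => J; rewrite /P (negbTE Nmeet) !andbF.
have tN : t \notin N by apply: contraL tD => tN; rewrite (disjointFr Ndisj).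
apply: (sum_toggle_eq0 (t := t)) => J; last first.
  by move=> _; rewrite toggle_setD // exprD sign_toggle mulNr -exprD.
by rewrite /P toggle_setD // !subset_toggle // toggle_subset.
Qed.

Lemma eq_setD_disjoint J K D : K \subset J -> [disjoint K & D] ->
  (K == J :\: D) = (J :\: K \subset D).
Proof.
move=> /subsetP KJ /disjointFr KD; apply/eqP/subsetP => [-> y|sub].
  by rewrite !inE negb_and negbK => /andP [/orP [->|/negbTE ->]].
apply/setP => y; rewrite inE; case yK: (y \in K); first by rewrite (KD _ yK) KJ.
by case yJ: (y \in J); rewrite ?andbF //= (sub y) // inE yK yJ.
Qed.

End SignedSubsetSums.

Section ListSums.
Variable A : Type.
Local Open Scope ring_scope.

Lemma In_mem (B : eqType) (x : B) (l : seq B) : List.In x l <-> x \in l.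
Proof.
elim: l => [|a l IH] //=; rewrite in_cons; split.
  by case=> [->|/IH ->]; rewrite ?eqxx ?orbT.
by case/orP => [/eqP ->|/IH]; [left|right].
Qed.

Lemma NoDup_map_inj (B : eqType) (f : B -> A) (l : seq B) :
  uniq l -> {in l &, injective f} -> List.NoDup (map f l).
Proof.
elim: l => [|a l IH] /=; first by constructor.
move=> /andP [al ul] inj; constructor; last first.
  by apply: IH => // y z yl zl; apply: inj; rewrite in_cons ?yl ?zl orbT.
case/List.in_map_iff => b [fba /In_mem bl].
by move: al; rewrite -(inj b a) ?bl ?mem_head // in_cons bl orbT.
Qed.

Lemma big_Permutation (l l' : seq A) (f : A -> int) :
  Permutation.Permutation l l' -> \sum_(z <- l) f z = \sum_(z <- l') f z.
Proof.
elim=> [|a l1 l2 _ IH|a b l1|l1 l2 l3 _ IH1 _ IH2] //.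
- by rewrite !big_cons IH.
- by rewrite !big_cons addrCA.
- by rewrite IH1 IH2.
Qed.

Lemma sum_eq_In (l : seq A) (f g : A -> int) :
  (forall z, List.In z l -> f z = g z) -> \sum_(z <- l) f z = \sum_(z <- l) g z.
Proof.
elim: l => [|a l IH] fg; first by rewrite !big_nil.
by rewrite !big_cons fg /=; [rewrite IH // => z zl; apply: fg; right | left].
Qed.

Lemma sum_indicator_notIn (l : seq A) (v : A) (c : int) :
  ~ List.In v l -> \sum_(z <- l) (if `[< z = v >] then c else 0) = 0.
Proof.
elim: l => [|a l IH] vl; first by rewrite big_nil.
rewrite big_cons IH => [|vl']; last by apply: vl; right.
by rewrite asboolF ?addr0 // => av; apply: vl; left.
Qed.

Lemma sum_indicator_NoDup (l : seq A) (v : A) (c : int) :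
  List.NoDup l -> List.In v l -> \sum_(z <- l) (if `[< z = v >] then c else 0) = c.
Proof.
elim=> [//|a l' nal _ IH] [av|vl]; rewrite big_cons.
  by rewrite asboolT // sum_indicator_notIn ?addr0 // -av.
by rewrite IH // asboolF ?add0r // => av; apply: nal; rewrite av.
Qed.

End ListSums.

Section RemNth.
Variable A : Type.
Implicit Types s : seq A.

Definition rem_nth (i : nat) s := take i s ++ drop i.+1 s.

Lemma rem_nth0 a s : rem_nth 0 (a :: s) = s.
Proof. by rewrite /rem_nth /= drop0. Qed.

Lemma rem_nthS i a s : rem_nth i.+1 (a :: s) = a :: rem_nth i s.
Proof. by []. Qed.

Lemma size_rem_nth i s : i < size s -> size (rem_nth i s) = (size s).-1.
Proof.
elim: s i => [|a s IH] [|i] // lt; first by rewrite rem_nth0.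
by rewrite rem_nthS /= IH //; move: lt => /=; lia.
Qed.

Lemma rem_nth_cat i s1 s2 : rem_nth i (s1 ++ s2) =
  if i < size s1 then rem_nth i s1 ++ s2 else s1 ++ rem_nth (i - size s1) s2.
Proof.
elim: s1 i => [|a s1 IH] [|i] //; rewrite cat_cons ?rem_nth0 // !rem_nthS IH /=.
by rewrite ltnS subSS; case: ifP.
Qed.

End RemNth.

Lemma mem_rem_nth (A : eqType) i (s : seq A) : {subset rem_nth i s <= s}.
Proof. by move=> x; rewrite mem_cat => /orP [/mem_take|/mem_drop]. Qed.

Fixpoint words_upto (T : finType) (n : nat) : seq (seq T) :=
  if n is n'.+1 then [::] :: [seq s :: ws | s <- enum T, ws <- words_upto T n']
  else [:: [::]].

Lemma words_uptoP (T : finType) n (ws : seq T) : size ws <= n -> ws \in words_upto T n.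
Proof.
elim: n ws => [|n IH] [|s ws] //= le_n; rewrite in_cons /=.
by apply: (allpairs_f (fun s ws => s :: ws)); rewrite ?mem_enum ?IH.
Qed.

Lemma big_addb_periodic (b : nat -> bool) n :
  (forall m, b (m + n) = b m) -> \big[addb/false]_(0 <= m < n.*2) b m = false.
Proof.
move=> per; rewrite -addnn (@big_cat_nat _ _ _ n) ?leq_addr //=.
have -> : \big[addb/false]_(n <= m < n + n) b m = \big[addb/false]_(0 <= m < n) b m.
  by rewrite -{1}[n]add0n big_addn addnK; apply: eq_bigr => m _; rewrite per.
by rewrite addbb.
Qed.

Section CoxeterGroup.
Variables (T : finType) (W : group) (gen : T -> W).
Hypothesis cox : coxeter_system gen.
Local Notation "x ** y" := (gmul x y) (at level 40, left associativity).
Local Notation one := (gone W).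
Local Notation prodw := (prodw gen).
Local Notation len := (len gen).
Local Notation reduced := (reduced gen).
Implicit Types (s t : T) (ws vs : seq T) (a r w x y z : W).

(** * Reduced words and length *)

Lemma gen_inj : injective gen. Proof. by case: cox. Qed.

Lemma gen_mulgg s : gen s ** gen s = one.
Proof. by case: cox => _ invol _ _; case: (invol s). Qed.

Lemma gen_neq1 s : gen s <> one.
Proof. by case: cox => _ invol _ _; case: (invol s). Qed.

Lemma ginv_gen s : ginv (gen s) = gen s.
Proof. by symmetry; apply: ginv_unique; rewrite gen_mulgg. Qed.

Lemma prodw_surj w : exists ws, prodw ws = w.
Proof. by case: cox => _ _ gener _; apply: gener. Qed.

Lemma prodw_cat ws vs : prodw (ws ++ vs) = prodw ws ** prodw vs.
Proof. by elim: ws => [|s ws IH] /=; rewrite ?gmul1g // IH gmulA. Qed.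

Lemma prodw_rcons ws s : prodw (rcons ws s) = prodw ws ** gen s.
Proof. by rewrite -cats1 prodw_cat /= gmulg1. Qed.

Lemma prodw_rev ws : prodw (rev ws) = ginv (prodw ws).
Proof.
elim: ws => [|s ws IH] /=; first by rewrite ginv1.
by rewrite rev_cons prodw_rcons IH ginvM ginv_gen.
Qed.

Lemma exists_reduced w : exists ws, prodw ws = w /\ reduced ws.
Proof.
have ex : exists n, `[< exists ws, prodw ws = w /\ size ws = n >].
  by have [ws e] := prodw_surj w; exists (size ws); apply/asboolP; exists ws.
case: (ex_minnP ex) => n /asboolP [ws [e <-]] min; exists ws; split => // vs ev.
by apply: min; apply/asboolP; exists vs; rewrite ev.
Qed.

Lemma reduced_size_eq ws vs :
  reduced ws -> reduced vs -> prodw ws = prodw vs -> size ws = size vs.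
Proof. by move=> rw rv e; apply/eqP; rewrite eqn_leq rw // rv. Qed.

Lemma len_reduced_word w : exists ws, [/\ prodw ws = w, reduced ws & size ws = len w].
Proof.
have [ws [e r]] := exists_reduced w.
have [|vs [ev [rv sv]]] := @epsilon_spec nat (inhabits 0) (is_length gen w).
  by exists (size ws), ws.
by exists vs.
Qed.

Lemma len_prodw_reduced ws : reduced ws -> len (prodw ws) = size ws.
Proof.
have [vs [e rv <-]] := len_reduced_word (prodw ws).
by move=> rw; apply: reduced_size_eq.
Qed.

Lemma len_prodw ws : len (prodw ws) <= size ws.
Proof. by have [vs [e rv <-]] := len_reduced_word (prodw ws); apply: rv. Qed.

Lemma reduced_len ws : size ws = len (prodw ws) -> reduced ws.
Proof. by move=> e vs ev; rewrite e -ev len_prodw. Qed.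

Lemma len1 : len one = 0.
Proof. by apply/eqP; rewrite -leqn0 (len_prodw [::]). Qed.

Lemma len_eq0 w : len w = 0 -> w = one.
Proof. by have [[|s ws] [<- _ <-]] := len_reduced_word w. Qed.

Lemma len_gen s : len (gen s) = 1.
Proof.
apply/eqP; rewrite eqn_leq -{1}[gen s]gmulg1 (len_prodw [:: s]) lt0n.
by apply/eqP => /len_eq0; apply: gen_neq1.
Qed.

Lemma len_mulg x y : len (x ** y) <= len x + len y.
Proof.
have [xs [<- _ <-]] := len_reduced_word x; have [ys [<- _ <-]] := len_reduced_word y.
by rewrite -prodw_cat -size_cat len_prodw.
Qed.

Lemma reduced_catl ws vs : reduced (ws ++ vs) -> reduced ws.
Proof.
move=> r; apply: reduced_len; apply/eqP; rewrite eqn_leq len_prodw /=.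
have := len_mulg (prodw ws) (prodw vs); rewrite -prodw_cat len_prodw_reduced // size_cat.
by have := len_prodw vs; lia.
Qed.

Lemma reduced_rcons ws s : reduced (rcons ws s) -> reduced ws.
Proof. by rewrite -cats1; apply: reduced_catl. Qed.

Definition parity_group : group.
refine (@Defs.Group bool addb false id _ _ _).
- by move=> x y z; rewrite addbA.
- by [].
- by move=> x; rewrite addbb.
Defined.

Lemma parity_hom : exists phi : W -> bool, forall ws, phi (prodw ws) = odd (size ws).
Proof.
case: cox => _ _ _ univ; case: (univ parity_group (fun=> true)).
  by move=> s t n _; elim: n => //= n ->.
move=> phi [hom phi_gen]; exists phi; elim => [|s ws IH] /=; first exact: (group_hom1 hom).
by rewrite (hom (gen s)) IH phi_gen.
Qed.

Lemma odd_size_prodw ws vs : prodw ws = prodw vs -> odd (size ws) = odd (size vs).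
Proof. by case: parity_hom => phi phiE e; rewrite -!phiE e. Qed.

Lemma odd_len_prodw ws : odd (len (prodw ws)) = odd (size ws).
Proof. by have [vs [e _ <-]] := len_reduced_word (prodw ws); apply: odd_size_prodw. Qed.

Lemma odd_len_mulg x y : odd (len (x ** y)) = odd (len x) (+) odd (len y).
Proof.
have [xs [<- _ <-]] := len_reduced_word x; have [ys [<- _ <-]] := len_reduced_word y.
by rewrite -prodw_cat odd_len_prodw size_cat oddD.
Qed.

Lemma len_mulg_gen w s : len (w ** gen s) = (len w).+1 \/ (len (w ** gen s)).+1 = len w.
Proof.
have up := len_mulg w (gen s); have down := len_mulg (w ** gen s) (gen s).
have odd_ne := odd_len_mulg w (gen s).
rewrite -gmulA gen_mulgg gmulg1 len_gen in down up odd_ne.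
by move: odd_ne up down; case: (ltngtP (len (w ** gen s)) (len w)) => [||->]; lia.
Qed.

(** * The reflection cocycle and the exchange condition *)

Definition eqW x y : bool := `[< x = y >].

Lemma eqW_conj a x y : eqW (a ** x ** ginv a) y = eqW x (ginv a ** y ** a).
Proof.
apply: asbool_equiv_eq; split => [<-|->].
  by rewrite -!gmulA gmulKg gmulVg gmulg1.
by rewrite !gmulA gmulgV gmul1g gmulgK.
Qed.

(* Tits' action of [gen s] on pairs (reflection, sign). *)
Definition refl_act s (p : W * bool) : W * bool :=
  (gen s ** p.1 ** gen s, p.2 (+) eqW p.1 (gen s)).

Lemma refl_actK s : involutive (refl_act s).
Proof.
case=> x e; rewrite /refl_act /=.
have -> : gen s ** (gen s ** x ** gen s) ** gen s = x.
  by rewrite -!gmulA gen_mulgg gmulg1 gmulA gen_mulgg gmul1g.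
have -> : eqW (gen s ** x ** gen s) (gen s) = eqW x (gen s).
  by rewrite -{2}(ginv_gen s) eqW_conj ginv_gen -gmulA gen_mulgg gmulg1.
by rewrite -addbA addbb addbF.
Qed.

Definition refl_perm s : sym_group (W * bool) :=
  Bijection (refl_actK s) (refl_actK s).

Definition refl_act_word ws : W * bool -> W * bool :=
  foldr (fun s f => refl_act s \o f) id ws.

(* [ncross ws x] counts the letters of [ws] that right multiplication by [x]
   deletes (see [ncross_pos]). *)
Fixpoint ncross ws x : nat :=
  if ws is s :: vs then eqW x (ginv (prodw vs) ** gen s ** prodw vs) + ncross vs x
  else 0.

Lemma refl_act_wordE ws x e : refl_act_word ws (x, e) =
  (prodw ws ** x ** ginv (prodw ws), e (+) odd (ncross ws x)).
Proof.
elim: ws => [|s ws IH] /=; first by rewrite gmul1g ginv1 gmulg1 addbF.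
rewrite IH /refl_act /= ginvM ginv_gen !gmulA; congr pair.
by rewrite oddD eqW_conj; case: eqW; case: odd; case: (e).
Qed.

Lemma refl_act_pair_iter s t k x e :
  iter k (refl_act s \o refl_act t) (x, e) =
    (gpow (gen s ** gen t) k ** x ** gpow (gen t ** gen s) k,
     e (+) \big[addb/false]_(0 <= m < k.*2) eqW x (gpow (gen t ** gen s) m ** gen t)).
Proof.
set c := gen s ** gen t; set d := gen t ** gen s.
have dV j : gpow d j = ginv (gpow c j) by rewrite -gpowV /c ginvM !ginv_gen.
have tc j : gen t ** gpow c j = gpow d j ** gen t by apply: gmul_gpowC.
elim: k => [|k IH]; first by rewrite /= gmul1g gmulg1 big_geq ?addbF.
rewrite iterS IH /refl_act /=; congr pair.
  by rewrite -[d ** _]/(gpow d k.+1) gpowSr /c /d -!gmulA.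
have cross_t : eqW (gpow c k ** x ** gpow d k) (gen t) = eqW x (gpow d k.*2 ** gen t).
  by rewrite dV eqW_conj -dV -gmulA tc gmulA -gpowD addnn.
have cross_s : eqW (gen t ** (gpow c k ** x ** gpow d k) ** gen t) (gen s)
             = eqW x (gpow d (k.*2).+1 ** gen t).
  have -> : gen t ** (gpow c k ** x ** gpow d k) ** gen t
          = (gen t ** gpow c k) ** x ** ginv (gen t ** gpow c k).
    by rewrite ginvM ginv_gen -dV !gmulA.
  rewrite eqW_conj ginvM ginv_gen -dV tc -addnn -addSn gpowD gpowSr.
  by rewrite /d !gmulA.
by rewrite cross_t cross_s doubleS !big_nat_recr //= -!addbA.
Qed.

Lemma refl_perm_rel s t n : gpow (gen s ** gen t) n = one ->
  gpow (gmul (refl_perm s) (refl_perm t)) n = gone (sym_group (W * bool)).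
Proof.
move=> cn; have dn : gpow (gen t ** gen s) n = one.
  by rewrite -(ginv_gen s) -(ginv_gen t) -ginvM gpowV cn ginv1.
apply: bij_ext => -[x e] /=; rewrite bij_fun_gpow refl_act_pair_iter cn dn.
rewrite gmul1g gmulg1 big_addb_periodic ?addbF // => m.
by rewrite gpowD dn gmulg1.
Qed.

Lemma refl_act_word_eq ws vs :
  prodw ws = prodw vs -> refl_act_word ws =1 refl_act_word vs.
Proof.
case: cox => _ _ _ univ; have [phi [hom phi_gen]] := univ _ refl_perm refl_perm_rel.
have act_phi us : refl_act_word us =1 bij_fun (phi (prodw us)).
  elim: us => [|s us IH] p /=; first by rewrite (group_hom1 hom).
  by rewrite (hom (gen s)) /= phi_gen /= IH.
by move=> e p; rewrite !act_phi e.
Qed.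

Lemma odd_ncross_prodw ws vs x :
  prodw ws = prodw vs -> odd (ncross ws x) = odd (ncross vs x).
Proof. by move/refl_act_word_eq/(_ (x, false)); rewrite !refl_act_wordE => -[]. Qed.

Lemma ncross_pos ws x : 0 < ncross ws x ->
  exists2 i, i < size ws & prodw ws ** x = prodw (rem_nth i ws).
Proof.
elim: ws => [|s ws IH] //=; case: (boolP (eqW _ _)) => [/asboolP ->|_] /= pos.
  by exists 0 => //; rewrite rem_nth0 !gmulA gmulgK gen_mulgg gmul1g.
by have [i lt e] := IH pos; exists i.+1; rewrite // rem_nthS /= -gmulA e.
Qed.

Lemma ncross_cat ws vs x :
  ncross (ws ++ vs) x = ncross ws (prodw vs ** x ** ginv (prodw vs)) + ncross vs x.
Proof.
elim: ws => [|s ws IH] //=; rewrite IH addnA prodw_cat eqW_conj ginvM.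
by rewrite -!gmulA.
Qed.

Definition is_refl r := exists a s, r = a ** gen s ** ginv a.

Lemma refl_mulgg r : is_refl r -> r ** r = one.
Proof.
by case=> a [s ->]; rewrite -!gmulA gmulKg (gmulA (gen s)) gen_mulgg gmul1g gmulgV.
Qed.

Lemma ginv_refl r : is_refl r -> ginv r = r.
Proof. by move=> /refl_mulgg rr; symmetry; apply: ginv_unique. Qed.

Lemma is_refl_gen s : is_refl (gen s).
Proof. by exists one, s; rewrite gmul1g ginv1 gmulg1. Qed.

Lemma is_refl_conj a r : is_refl r -> is_refl (a ** r ** ginv a).
Proof. by case=> b [s ->]; exists (a ** b), s; rewrite ginvM !gmulA. Qed.

(* The palindrome [A s (rev A)] crosses [r] an odd number of times, because
   [A ++ rev A] is a word for [one]. *)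
Lemma refl_word r : is_refl r ->
  exists rs, [/\ prodw rs = r, odd (size rs) & odd (ncross rs r)].
Proof.
case=> a [s {r}->]; have [A <-] := prodw_surj a.
set r := prodw A ** gen s ** ginv (prodw A).
have conj_r : prodw (rev A) ** r ** ginv (prodw (rev A)) = gen s.
  by rewrite prodw_rev ginvK /r !gmulA gmulVg gmul1g gmulgKV.
have ncross_rev : odd (ncross A (gen s)) = odd (ncross (rev A) r).
  have /(odd_ncross_prodw r) : prodw (A ++ rev A) = prodw [::].
    by rewrite prodw_cat prodw_rev gmulgV.
  by rewrite ncross_cat conj_r oddD /=; case: odd; case: odd.
exists (A ++ s :: rev A); split.
- by rewrite prodw_cat /= prodw_rev gmulA.
- by rewrite size_cat /= size_rev addnS /= oddD addbb.
rewrite ncross_cat.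
have -> : prodw (s :: rev A) ** r ** ginv (prodw (s :: rev A)) = gen s.
  transitivity (gen s ** (prodw (rev A) ** r ** ginv (prodw (rev A))) ** gen s).
    by rewrite /= ginvM ginv_gen !gmulA.
  by rewrite conj_r gen_mulgg gmul1g.
have r_self : eqW r (ginv (prodw (rev A)) ** gen s ** prodw (rev A)).
  by apply/asboolP; rewrite prodw_rev ginvK.
by rewrite /= r_self !oddD ncross_rev; case: odd.
Qed.

Lemma strong_exchange r ws : is_refl r -> reduced ws ->
  len (prodw ws ** r) < len (prodw ws) ->
  exists2 i, i < size ws & prodw ws ** r = prodw (rem_nth i ws).
Proof.
move=> refl_r rw shorter; apply: ncross_pos.
suff : odd (ncross ws r) by case: ncross.
have [vs [ev rv sv]] := len_reduced_word (prodw ws ** r).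
have [rs [er odd_rs cross_rs]] := refl_word refl_r.
have e : prodw ws = prodw (vs ++ rs) by rewrite prodw_cat ev er -gmulA refl_mulgg ?gmulg1.
rewrite (odd_ncross_prodw _ e) ncross_cat oddD er refl_mulgg // gmul1g ginv_refl //.
rewrite cross_rs; case odd_vs: (odd (ncross vs r)) => //=.
have pos : 0 < ncross vs r by move: odd_vs; case: ncross.
have [i lt ei] := ncross_pos pos.
move: ei; rewrite ev -gmulA refl_mulgg // gmulg1 => ei.
by have := len_prodw (rem_nth i vs); rewrite -ei size_rem_nth // sv; lia.
Qed.

Lemma odd_len_refl r : is_refl r -> odd (len r).
Proof. by case/refl_word => rs [<- odd_rs _]; rewrite odd_len_prodw. Qed.

Lemma len_mulg_refl_neq x r : is_refl r -> len (x ** r) <> len x.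
Proof.
by move/odd_len_refl => odd_r e; move: (odd_len_mulg x r); rewrite e odd_r; case: odd.
Qed.

Lemma exchange s ws : reduced ws -> len (prodw ws ** gen s) < len (prodw ws) ->
  exists2 i, i < size ws & prodw ws ** gen s = prodw (rem_nth i ws).
Proof. exact: strong_exchange (is_refl_gen s). Qed.

Lemma reduced_subword ws : exists vs, [/\ prodw vs = prodw ws, reduced vs & {subset vs <= ws}].
Proof.
elim/last_ind: ws => [|ws s [vs [e rv sub]]]; first by exists [::].
have lv := len_prodw_reduced rv; rewrite e in lv.
have sub_rcons : {subset vs <= rcons ws s}.
  by move=> y /sub; rewrite mem_rcons in_cons => ->; rewrite orbT.
case: (len_mulg_gen (prodw ws) s) => longer.
  exists (rcons vs s); split; first by rewrite !prodw_rcons e.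
    by apply: reduced_len; rewrite prodw_rcons e longer size_rcons lv.
  move=> y; rewrite mem_rcons in_cons => /orP [/eqP ->|/sub_rcons //].
  by rewrite mem_rcons mem_head.
have shorter : len (prodw vs ** gen s) < len (prodw vs) by rewrite e -longer.
have [i lt ei] := exchange rv shorter.
exists (rem_nth i vs); split; first by rewrite -ei e prodw_rcons.
  by apply: reduced_len; rewrite -ei size_rem_nth // -(len_prodw_reduced rv) e -longer.
by move=> y /mem_rem_nth /sub_rcons.
Qed.

(** * Parabolic subgroups, supports and descents *)

Local Notation inW := (inW gen).
Local Notation inX := (inX gen).
Local Notation supp := (supp gen).
Local Notation Des := (Des gen).
Local Notation up := (comp_up gen).
Local Notation low := (comp_low gen).
Implicit Types I J K N : {set T}.

Lemma inW1 I : inW I one. Proof. by exists [::]. Qed.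

Lemma inW_gen I s : s \in I -> inW I (gen s).
Proof. by move=> sI; exists [:: s]; rewrite /= sI gmulg1. Qed.

Lemma inW_mul I x y : inW I x -> inW I y -> inW I (x ** y).
Proof.
by case=> xs [xsI <-] [ys [ysI <-]]; exists (xs ++ ys); rewrite all_cat xsI ysI prodw_cat.
Qed.

Lemma inW_inv I x : inW I x -> inW I (ginv x).
Proof. by case=> xs [xsI <-]; exists (rev xs); rewrite all_rev xsI prodw_rev. Qed.

Lemma inW_subset I J x : I \subset J -> inW I x -> inW J x.
Proof.
move=> /subsetP IJ [xs [xsI <-]]; exists xs; split => //.
by apply/allP => y /(allP xsI) /IJ.
Qed.

Lemma inW_reduced_word I w :
  inW I w -> exists ws, [/\ prodw ws = w, reduced ws & all (fun s => s \in I) ws].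
Proof.
case=> ws [wsI <-]; have [vs [e rv sub]] := reduced_subword ws.
by exists vs; split => //; apply/allP => y /sub /(allP wsI).
Qed.

Lemma inW_gen_mem I s : inW I (gen s) -> s \in I.
Proof.
case/inW_reduced_word => vs [e rv vsI]; have := len_prodw_reduced rv.
rewrite e len_gen; case: vs e {rv} vsI => [|a [|b vs]] //= e aI _.
by move: e aI; rewrite gmulg1 andbT => /gen_inj ->.
Qed.

Lemma inW_letters I ws : reduced ws -> inW I (prodw ws) -> all (fun s => s \in I) ws.
Proof.
elim/last_ind: ws => [|ws s IH] // rw inI.
have rw' := reduced_rcons rw.
have shorter : len (prodw (rcons ws s) ** gen s) < len (prodw (rcons ws s)).
  by rewrite {1}prodw_rcons -gmulA gen_mulgg gmulg1 !len_prodw_reduced // size_rcons.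
have [vs [e rv vsI]] := inW_reduced_word inI.
rewrite -e in shorter; have [i lt ei] := exchange rv shorter.
have inI' : inW I (prodw ws).
  rewrite -(gmulgK (prodw ws) (gen s)) ginv_gen -prodw_rcons -e ei.
  by exists (rem_nth i vs); split => //; apply/allP => y /mem_rem_nth /(allP vsI).
have sI : s \in I.
  apply: inW_gen_mem; rewrite -(gmulKg (prodw ws) (gen s)) -prodw_rcons.
  by apply: inW_mul => //; apply: inW_inv.
by rewrite all_rcons sI IH.
Qed.

Lemma suppP s w : reflect (exists ws, [/\ prodw ws = w, reduced ws & s \in ws]) (s \in supp w).
Proof.
rewrite /Defs.supp inE; apply: (iffP idP) => [/asboolP [ws [e [r sws]]]|[ws [e r sws]]].
  by exists ws.
by apply/asboolP; exists ws.
Qed.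

Lemma supp_subset I w : inW I w -> supp w \subset I.
Proof.
move=> inI; apply/subsetP => s /suppP [ws [e r sws]].
by rewrite -e in inI; apply: (allP (inW_letters r inI)).
Qed.

Lemma inW_supp w : inW (supp w) w.
Proof.
have [ws [e r]] := exists_reduced w; exists ws; split => //.
by apply/allP => s sws; apply/suppP; exists ws.
Qed.

Lemma inW_suppP I w : inW I w <-> supp w \subset I.
Proof. by split => [/supp_subset //|/inW_subset]; apply; apply: inW_supp. Qed.

Lemma supp1 : supp one = set0.
Proof. by apply/eqP; rewrite -subset0; apply: supp_subset; apply: inW1. Qed.

Lemma in_Des s w : (s \in Des w) = (len (w ** gen s) < len w).
Proof. by rewrite /Defs.Des inE; apply/asboolP/idP. Qed.

Lemma notin_Des s w : (s \notin Des w) = (len w < len (w ** gen s)).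
Proof. by rewrite in_Des -leqNgt; case: (len_mulg_gen w s) => e; apply/idP/idP; lia. Qed.

Lemma exists_Des w : w <> one -> exists s, s \in Des w.
Proof.
have [ws [<- rw _]] := len_reduced_word w.
case/lastP: ws rw => [|ws s] rw ne1 //; exists s; rewrite in_Des.
rewrite prodw_rcons -gmulA gen_mulgg gmulg1 -prodw_rcons (len_prodw_reduced rw).
by rewrite size_rcons ltnS len_prodw.
Qed.

Lemma Des_subset_supp w : Des w \subset supp w.
Proof.
apply/subsetP => s; rewrite in_Des => shorter.
have [ws [e r]] := exists_reduced w; rewrite -e in shorter.
have [i lt ei] := exchange r shorter.
apply: inW_gen_mem; rewrite -(gmulKg w (gen s)) -e.
apply: inW_mul; first by apply: inW_inv; rewrite e; apply: inW_supp.
rewrite ei; exists (rem_nth i ws); split => //; apply/allP => y /mem_rem_nth yws.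
by apply/suppP; exists ws.
Qed.

Lemma inX_disjoint_Des I x : inX I x <-> [disjoint I & Des x].
Proof.
split => [Xx|dis s sI]; last by rewrite -notin_Des (disjointFr dis sI).
apply/pred0P => s /=; case sI: (s \in I) => //=.
by apply/negbTE; rewrite notin_Des Xx.
Qed.

Lemma inX_notin_Des I x s : inX I x -> s \in I -> s \notin Des x.
Proof. by move=> Xx sI; rewrite notin_Des Xx. Qed.

Lemma inX1 I : inX I one.
Proof. by move=> s _; rewrite gmul1g len1 len_gen. Qed.

(** * Parabolic factorisation *)

Definition coset_min I x := forall z, inW I z -> len x <= len (x ** z).

Lemma exists_coset_min_factor I w : exists x z, [/\ w = x ** z, inW I z & coset_min I x].
Proof.
have ex : exists n, `[< exists z, inW I z /\ len (w ** ginv z) = n >].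
  by exists (len (w ** ginv one)); apply/asboolP; exists one; split => //; apply: inW1.
case: (ex_minnP ex) => n /asboolP [z [zI <-]] min.
exists (w ** ginv z), z; split; rewrite ?gmulgKV // => y yI.
apply: min; apply/asboolP; exists (ginv y ** z); split.
  by apply: inW_mul => //; apply: inW_inv.
by rewrite ginvM ginvK gmulA.
Qed.

Lemma len_coset_min_mulg_gen I x zs s : coset_min I x -> s \in I ->
  all (fun s => s \in I) zs -> reduced (rcons zs s) ->
  len (x ** prodw zs) = len x + size zs ->
  len (x ** prodw zs ** gen s) = (len (x ** prodw zs)).+1.
Proof.
move=> minx sI zsI rzs lenxz; case: (len_mulg_gen (x ** prodw zs) s) => // longer.
have [xs [ex rx sx]] := len_reduced_word x.
have rxz : reduced (xs ++ zs) by apply: reduced_len; rewrite prodw_cat ex lenxz size_cat sx.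
have shorter : len (prodw (xs ++ zs) ** gen s) < len (prodw (xs ++ zs)).
  by rewrite prodw_cat ex -longer.
have [i lt] := exchange rxz shorter; rewrite rem_nth_cat prodw_cat ex.
case: ifP => i_xs; rewrite prodw_cat => ei.
  have zsW : inW I (prodw zs) by exists zs; split.
  have zI : inW I (prodw zs ** gen s ** ginv (prodw zs)).
    by apply: inW_mul; [apply: inW_mul => //; apply: inW_gen | apply: inW_inv].
  have := minx _ zI; rewrite !gmulA ei gmulgK.
  by have := len_prodw (rem_nth i xs); rewrite size_rem_nth //; lia.
have ej : prodw zs ** gen s = prodw (rem_nth (i - size xs) zs).
  by apply: (@gmulgI _ x); rewrite gmulA ei ex.
have := len_prodw (rem_nth (i - size xs) zs); rewrite -ej -prodw_rcons.
by rewrite len_prodw_reduced // size_rcons size_rem_nth; move: lt; rewrite size_cat; lia.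
Qed.

Lemma len_coset_min_mulg I x z : coset_min I x -> inW I z -> len (x ** z) = len x + len z.
Proof.
move=> minx /inW_reduced_word [zs [<- rzs zsI]]; rewrite len_prodw_reduced //.
elim/last_ind: zs rzs zsI => [|zs s IH] rzs; first by rewrite gmulg1 addn0.
rewrite all_rcons => /andP [sI zsI]; have rzs' := reduced_rcons rzs.
rewrite prodw_rcons gmulA (len_coset_min_mulg_gen minx) ?IH //.
by rewrite size_rcons addnS.
Qed.

Lemma coset_min_inX I x : coset_min I x -> inX I x.
Proof.
by move=> minx s sI; have := minx _ (inW_gen sI); case: (len_mulg_gen x s); lia.
Qed.

Lemma inX_coset_min I x : inX I x -> coset_min I x.
Proof.
move=> Xx; have [u [z [ex zI minu]]] := exists_coset_min_factor I x.
suff z1 : z = one by move=> y yI; rewrite ex z1 gmulg1; apply: minu.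
have [zs [ez rzs zsI]] := inW_reduced_word zI; apply: len_eq0; rewrite -ez.
case/lastP: zs ez rzs zsI => [|zs s] ez rzs; first by rewrite len1.
rewrite all_rcons => /andP [sI _]; have := Xx s sI.
have -> : x ** gen s = u ** prodw zs by rewrite ex -ez prodw_rcons -!gmulA gen_mulgg gmulg1.
rewrite ex (len_coset_min_mulg minu) // -ez (len_prodw_reduced rzs) size_rcons.
by have := len_mulg u (prodw zs); have := len_prodw zs; lia.
Qed.

Lemma parabP I w : [/\ w = up I w ** low I w, inX I (up I w) & inW I (low I w)].
Proof.
rewrite /comp_up /comp_low /parab.
have [|e [Xx zI]] :=
  @epsilon_spec _ (inhabits (w, w)) (fun p => w = p.1 ** p.2 /\ inX I p.1 /\ inW I p.2).
  have [x [z [e zI minx]]] := exists_coset_min_factor I w.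
  by exists (x, z); split => //; split => //; apply: coset_min_inX.
by split.
Qed.

Lemma comp_up_low I w : w = up I w ** low I w. Proof. by case: (parabP I w). Qed.
Lemma inX_comp_up I w : inX I (up I w). Proof. by case: (parabP I w). Qed.
Lemma inW_comp_low I w : inW I (low I w). Proof. by case: (parabP I w). Qed.
Arguments comp_up_low : clear implicits.
Arguments inX_comp_up : clear implicits.
Arguments inW_comp_low : clear implicits.

Lemma comp_upE I w : up I w = w ** ginv (low I w).
Proof. by rewrite {2}(comp_up_low I w) gmulgK. Qed.

Lemma parab_factor_uniq I x z x' z' : x ** z = x' ** z' ->
  inX I x -> inW I z -> inX I x' -> inW I z' -> x = x' /\ z = z'.
Proof.
move=> e Xx zI Xx' zI'.
have zz'I : inW I (z ** ginv z') by apply: inW_mul => //; apply: inW_inv.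
have z'zI : inW I (z' ** ginv z) by apply: inW_mul => //; apply: inW_inv.
have ex' : x' = x ** (z ** ginv z') by rewrite gmulA e gmulgK.
have ex : x = x' ** (z' ** ginv z) by rewrite gmulA -e gmulgK.
have := len_coset_min_mulg (inX_coset_min Xx) zz'I.
have := len_coset_min_mulg (inX_coset_min Xx') z'zI.
rewrite -ex -ex' => l1 l2; have /len_eq0 zz'1 : len (z ** ginv z') = 0 by lia.
have ez : z = z' by rewrite -(gmulgKV z z') zz'1 gmul1g.
by rewrite ex' zz'1 gmulg1.
Qed.

Lemma parab_unique I w x z : w = x ** z -> inX I x -> inW I z ->
  up I w = x /\ low I w = z.
Proof.
move=> e Xx zI; apply: (parab_factor_uniq (I := I)) => //.
  by rewrite -comp_up_low.
exact: inX_comp_up.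
exact: inW_comp_low.
Qed.

Lemma parab_inW I w : inW I w -> up I w = one /\ low I w = w.
Proof. by move=> wI; apply: parab_unique => //; [rewrite gmul1g | apply: inX1]. Qed.

Lemma parab_inX I w : inX I w -> up I w = w /\ low I w = one.
Proof. by move=> Xw; apply: parab_unique => //; [rewrite gmulg1 | apply: inW1]. Qed.

Lemma supp_comp_low K z : supp (low K z) \subset K :&: supp z.
Proof.
set J := K :&: supp z; have lowJ := inW_comp_low J z.
suff [_ ->] : up K z = up J z /\ low K z = low J z by apply: supp_subset.
apply: parab_unique; rewrite -?comp_up_low //; last first.
  by apply: inW_subset lowJ; apply: subsetIl.
apply/inX_disjoint_Des/pred0P => s /=; apply/negbTE; rewrite negb_and.
case sJ: (s \in J); first by rewrite (inX_notin_Des (inX_comp_up J z) sJ) orbT.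
have upz : inW (supp z) (up J z).
  rewrite comp_upE; apply: inW_mul; first exact: inW_supp.
  by apply: inW_inv; apply: inW_subset lowJ; apply: subsetIr.
move: sJ; rewrite inE; case: (s \in K) => //= sz.
apply: contraFN sz => /(subsetP (Des_subset_supp _)) sD.
exact: (subsetP (supp_subset upz)).
Qed.

Lemma supp_comp_up K z : supp (up K z) \subset supp z.
Proof.
apply: supp_subset; rewrite comp_upE; apply: inW_mul; first exact: inW_supp.
apply/inW_inv/inW_suppP; apply: subset_trans (supp_comp_low K z) _; exact: subsetIr.
Qed.

Lemma len_comp I y : len y = len (up I y) + len (low I y).
Proof.
rewrite {1}(comp_up_low I y) (len_coset_min_mulg (inX_coset_min (inX_comp_up I y))) //.
exact: inW_comp_low.
Qed.
Arguments len_comp : clear implicits.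

Lemma len_comp_mulg_gen I y s : s \in I ->
  len (y ** gen s) = len (up I y) + len (low I y ** gen s).
Proof.
move=> sI; rewrite {1}(comp_up_low I y) -gmulA.
rewrite (len_coset_min_mulg (inX_coset_min (inX_comp_up I y))) //.
by apply: inW_mul; [apply: inW_comp_low | apply: inW_gen].
Qed.

Lemma inX_comp_low N J y : N \subset J -> inX N (low J y) <-> inX N y.
Proof.
move=> /subsetP NJ; have E s : s \in N ->
    (len (low J y) < len (low J y ** gen s)) = (len y < len (y ** gen s)).
  by move=> sN; rewrite (@len_comp_mulg_gen J y s (NJ s sN)) (len_comp J y) ltn_add2l.
by split => X s sN; [rewrite -E | rewrite E] => //; apply: X.
Qed.

(** * The order and its intervals *)

Local Notation le := (cox_le gen).

Lemma cox_le_supp u v : le u v -> supp u \subset supp v.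
Proof. by rewrite /cox_le => <-; rewrite (subset_trans (supp_comp_low _ _)) ?subsetIr. Qed.

Lemma cox_le_refl u : le u u.
Proof. by rewrite /cox_le; case: (parab_inW (inW_supp u)). Qed.

Lemma cox_le_supp_eq u v : le u v -> supp u = supp v -> u = v.
Proof. by rewrite /cox_le => e es; rewrite -e es; case: (parab_inW (inW_supp v)). Qed.

Lemma cox_le1 v : le one v.
Proof. by rewrite /cox_le supp1; case: (@parab_inX set0 v) => // s; rewrite inE. Qed.

Lemma cox_le_factor u v : le u v -> v = up (supp u) v ** u.
Proof. by rewrite /cox_le => e; rewrite {1}(comp_up_low (supp u) v) e. Qed.

Definition mobius_formula a z : int :=
  if `[< le a z >] then
    if (supp a == supp z :\: Des (up (supp a) z)) || `[< a = z >]
    then ((-1) ^+ (#|supp z| - #|supp a|))%R else 0%R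
  else 0%R.

Section Interval.
Variables u v : W.
Hypothesis le_uv : le u v.
Local Notation K := (supp u).
Local Notation x := (up (supp u) v).
Local Open Scope ring_scope.

Lemma parab_factor_le J : K \subset J -> up J v = up J x /\ low J v = low J x ** u.
Proof.
move=> KJ; apply: parab_unique; last 2 first.
- exact: inX_comp_up.
- by apply: inW_mul; [apply: inW_comp_low | apply: inW_subset KJ (inW_supp u)].
by rewrite gmulA -comp_up_low -cox_le_factor.
Qed.

Lemma comp_low_le J : K \subset J -> up K (low J v) = low J x /\ low K (low J v) = u.
Proof.
move=> KJ; apply: parab_unique; first by case: (parab_factor_le KJ).
  by apply/(inX_comp_low _ KJ); apply: inX_comp_up.
exact: inW_supp.
Qed.

Lemma le_comp_low J : K \subset J -> le u (low J v).
Proof. by move=> KJ; rewrite /cox_le; case: (comp_low_le KJ). Qed.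

Lemma supp_comp_low_le J : K \subset J -> J :\: K \subset Des (low J x) ->
  supp (low J v) = J.
Proof.
move=> KJ JKD; apply/eqP; rewrite eqEsubset.
rewrite (subset_trans (supp_comp_low J v)) ?subsetIl //=.
have [up_low low_low] := comp_low_le KJ; apply/subsetP => y yJ.
case yK: (y \in K).
  by rewrite -low_low in yK; move: (subsetP (supp_comp_low _ _) y yK); rewrite inE => /andP [].
have /(subsetP JKD)/(subsetP (Des_subset_supp _)) : y \in J :\: K by rewrite inE yK.
by rewrite -up_low => /(subsetP (supp_comp_up _ _)).
Qed.

Lemma mobius_formula_comp_low J : supp (low J v) = J -> le u (low J v) ->
  mobius_formula u (low J v) =
    if [&& K \subset J, J \subset supp v & J :\: K \subset Des (low J x)]
    then (-1) ^+ #|J :\: K| else 0.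
Proof.
move=> suppJ leJ; have KJ : K \subset J by rewrite -suppJ cox_le_supp.
have Jv : J \subset supp v.
  by rewrite -suppJ (subset_trans (supp_comp_low J v)) ?subsetIr.
have [up_low _] := comp_low_le KJ.
rewrite /mobius_formula (asboolT leJ) suppJ KJ Jv /= up_low.
have KD : [disjoint K & Des (low J x)].
  by apply/inX_disjoint_Des/(inX_comp_low _ KJ); apply: inX_comp_up.
rewrite (eq_setD_disjoint KJ KD) (cardsDS KJ).
case: (boolP `[< u = low J v >]) => [/asboolP eu|]; last by rewrite orbF.
by rewrite orbT -suppJ -eu setDv sub0set.
Qed.

Let in_interval J := (supp (low J v) == J) && `[< le u (low J v) >].

Lemma sum_mobius_formula_supports :
  \sum_(J : {set T} | in_interval J) mobius_formula u (low J v) =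
  \sum_(J : {set T}) (if [&& K \subset J, J \subset supp v & J :\: K \subset Des (low J x)]
          then (-1) ^+ #|J :\: K| else 0).
Proof.
rewrite big_mkcond; apply: eq_bigr => J _; rewrite /in_interval.
case: (boolP (supp _ == J)) => [/eqP suppJ|suppJ] /=.
  case: (boolP `[< _ >]) => /asboolP leJ; first by rewrite mobius_formula_comp_low.
  by case: ifP => // /and3P [KJ _ _]; case: leJ; apply: le_comp_low.
case: ifP => // /and3P [KJ _ JKD].
by move: suppJ; rewrite supp_comp_low_le ?eqxx.
Qed.

Lemma exists_Des_outside : u <> v -> exists t, [/\ t \in Des x, t \in supp v & t \notin K].
Proof.
move=> neq; have [|t tD] := exists_Des (w := x).
  by move=> x1; apply: neq; rewrite (cox_le_factor le_uv) x1 gmul1g.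
exists t; split => //.
  exact: (subsetP (supp_comp_up _ _)) _ ((subsetP (Des_subset_supp _)) _ tD).
by apply: contraTN tD => tK; apply: inX_notin_Des tK; apply: inX_comp_up.
Qed.

Lemma mobius_formula_interval_sum : u <> v -> exists s : seq W,
  [/\ List.NoDup s, forall z, List.In z s <-> le u z /\ le z v
    & \sum_(z <- s) mobius_formula u z = 0].
Proof.
move=> neq; exists [seq low J v | J <- [seq J <- index_enum {set T} | in_interval J]]; split.
- apply: NoDup_map_inj; first by rewrite filter_uniq ?index_enum_uniq.
  move=> J J'; rewrite !mem_filter => /andP [/andP [/eqP sJ _] _].
  by case/andP => /andP [/eqP sJ' _] _ e; rewrite -sJ -sJ' e.
- move=> z; rewrite List.in_map_iff; split.
    move=> [J [<- /In_mem]]; rewrite mem_filter => /andP [/andP [/eqP sJ /asboolP leJ] _].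
    by split => //; rewrite /cox_le sJ.
  move=> [uz zv]; exists (supp z); split => //; apply/In_mem.
  by rewrite mem_filter mem_index_enum andbT /in_interval zv eqxx; apply/asboolP.
rewrite big_map big_filter sum_mobius_formula_supports.
have [t [tD tv tK]] := exists_Des_outside neq.
apply: sum_sign_descent_sets_eq0 tD tv tK => J N KJ _ NJK.
have NJ : N \subset J := subset_trans NJK (subsetDl J K).
apply/idP/idP => /inX_disjoint_Des dis; apply/inX_disjoint_Des.
  by move/(inX_comp_low _ NJ): dis.
by apply/(inX_comp_low _ NJ).
Qed.

End Interval.

Lemma mobius_formula_is_mobius : is_mobius gen mobius_formula.
Proof.
move=> u v; split; [|split].
- by move=> <-; rewrite /mobius_formula (asboolT (cox_le_refl u)) asboolT ?orbT ?subnn.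
- by move=> nle; rewrite /mobius_formula asboolF.
move=> le_uv neq; have [s [nd sE sum0]] := mobius_formula_interval_sum le_uv neq.
by exists s.
Qed.

Lemma is_mobius_unique mu1 mu2 : is_mobius gen mu1 -> is_mobius gen mu2 ->
  forall u v, le u v -> mu1 u v = mu2 u v.
Proof.
move=> mob1 mob2 u v; move: {2}#|supp v|.+1 (ltnSn #|supp v|) => n.
elim: n v => [//|n IH] v lt_v le_uv.
have [<-|neq] := pselect (u = v).
  by rewrite (proj1 (mob1 u u) erefl) (proj1 (mob2 u u) erefl).
have [_ [_ /(_ le_uv neq) [s1 [nd1 [s1E sum1]]]]] := mob1 u v.
have [_ [_ /(_ le_uv neq) [s2 [nd2 [s2E sum2]]]]] := mob2 u v.
(* [g] is [mu2 u] with its value at [v] taken from [mu1 u]; by induction it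
   agrees with [mu1 u] on the whole interval. *)
pose g z := if `[< z = v >] then mu1 u v else mu2 u z.
have sum1g : (\sum_(z <- s1) mu1 u z = \sum_(z <- s1) g z)%R.
  apply: sum_eq_In => z /s1E [le_uz le_zv]; rewrite /g.
  have [->|nzv] := pselect (z = v); first by rewrite asboolT.
  have lt_z : #|supp z| < #|supp v|.
    apply: proper_card; rewrite properEneq cox_le_supp // andbT.
    by apply/eqP => es; apply: nzv; apply: cox_le_supp_eq.
  by rewrite asboolF //; apply: IH => //; lia.
have sum12 : (\sum_(z <- s1) g z = \sum_(z <- s2) g z)%R.
  by apply/big_Permutation/Permutation.NoDup_Permutation => // z; rewrite s1E s2E.
have : (\sum_(z <- s2) g z - \sum_(z <- s2) mu2 u z = mu1 u v - mu2 u v)%R.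
  rewrite -sumrB -(@sum_indicator_NoDup _ s2 v (mu1 u v - mu2 u v)%R nd2); last first.
    by apply/s2E; split => //; apply: cox_le_refl.
  apply: eq_bigr => z _; rewrite /g.
  by case: (pselect (z = v)) => [->|nzv]; rewrite ?(asboolT erefl) ?(asboolF nzv) ?subrr.
by rewrite sum2 subr0 -sum12 -sum1g sum1 => /esym /eqP; rewrite subr_eq0 => /eqP.
Qed.

Lemma mobiusE u v : le u v -> mobius gen u v = mobius_formula u v.
Proof.
move=> le_uv; apply: is_mobius_unique mobius_formula_is_mobius _ _ le_uv.
apply: (@epsilon_spec _ _ (is_mobius gen)).
by exists mobius_formula; apply: mobius_formula_is_mobius.
Qed.

Lemma mobius1 v :
  mobius gen one v = (if supp v \subset Des v then (-1) ^+ #|supp v| else 0)%R.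
Proof.
rewrite (mobiusE (cox_le1 v)) /mobius_formula (asboolT (cox_le1 v)) supp1 cards0 subn0.
have [-> _] : up set0 v = v /\ low set0 v = one by apply: parab_inX => s; rewrite inE.
rewrite eq_sym setD_eq0; case: (boolP `[< one = v >]) => [/asboolP <-|]; rewrite ?orbF //.
by rewrite supp1 sub0set.
Qed.

(** * Bruhat order and longest elements *)

Inductive bruhat : W -> W -> Prop :=
| bruhat_refl y : bruhat y y
| bruhat_step y z r : is_refl r -> len y < len (y ** r) -> bruhat (y ** r) z -> bruhat y z.

Lemma bruhat_len y z : bruhat y z -> len y <= len z.
Proof. by elim=> // a b r _ lt _ le; apply: leq_trans (ltnW lt) le. Qed.

Lemma bruhat_trans a b c : bruhat a b -> bruhat b c -> bruhat a c.
Proof. by elim=> // y z r refl_r lt _ IH bc; apply: bruhat_step refl_r lt (IH bc). Qed.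

Lemma bruhat_step1 y r : is_refl r -> len y < len (y ** r) -> bruhat y (y ** r).
Proof. by move=> refl_r lt; apply: bruhat_step refl_r lt (bruhat_refl _). Qed.

Lemma bruhat_mulg_gen y s : len (y ** gen s) < len y -> bruhat (y ** gen s) y.
Proof.
move=> lt; have e : y ** gen s ** gen s = y by rewrite -gmulA gen_mulgg gmulg1.
by rewrite -{2}e; apply: bruhat_step1; rewrite ?e //; apply: is_refl_gen.
Qed.

Lemma is_refl_conj_gen s r : is_refl r -> is_refl (gen s ** r ** gen s).
Proof. by rewrite -{2}(ginv_gen s); apply: is_refl_conj. Qed.

Lemma mulg_gen_conj y s r : y ** gen s ** (gen s ** r ** gen s) = y ** r ** gen s.
Proof. by rewrite !gmulA -(gmulA y) gen_mulgg gmulg1. Qed.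

Lemma refl_mulg_gen_eq y r s : is_refl r -> len y < len (y ** r) ->
  len (y ** gen s) = (len y).+1 -> len (y ** r ** gen s) < len (y ** gen s) ->
  y ** r = y ** gen s.
Proof.
move=> refl_r lt_yr lt_ys shorter.
have refl_srs := is_refl_conj_gen s refl_r; have conj_r := mulg_gen_conj y s r.
have [ys [ey rys sys]] := len_reduced_word y.
have rys_s : reduced (rcons ys s).
  by apply: reduced_len; rewrite prodw_rcons ey size_rcons sys lt_ys.
rewrite -conj_r -ey -prodw_rcons in shorter.
have [i lt] := strong_exchange refl_srs rys_s shorter.
rewrite prodw_rcons ey conj_r -cats1 rem_nth_cat; case: ifP => i_ys ei.
  have e : y ** r = prodw (rem_nth i ys).
    by apply: (@gmulIg _ (gen s)); rewrite /= ei prodw_cat /= gmulg1.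
  by have := len_prodw (rem_nth i ys); rewrite -e size_rem_nth //; lia.
move: ei; rewrite (_ : i - size ys = 0); last by rewrite size_rcons in lt; lia.
rewrite rem_nth0 cats0 ey => ei.
by rewrite -[y ** r]gmulg1 -(gen_mulgg s) gmulA ei.
Qed.

Lemma bruhat_lift_step y r s : is_refl r -> len y < len (y ** r) ->
  bruhat (y ** gen s) (y ** r) \/ bruhat (y ** gen s) (y ** r ** gen s).
Proof.
move=> refl_r lt_yr; case: (len_mulg_gen y s) => lt_ys; last first.
  by left; apply: bruhat_trans (bruhat_mulg_gen _) (bruhat_step1 refl_r lt_yr); rewrite -lt_ys.
have [e|ne] := pselect (y ** r = y ** gen s); first by left; rewrite e; apply: bruhat_refl.
have refl_srs := is_refl_conj_gen s refl_r.
right; rewrite -mulg_gen_conj; apply: bruhat_step1 => //.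
have := len_mulg_refl_neq (x := y ** gen s) refl_srs; rewrite mulg_gen_conj.
case: ltngtP => // [shorter _|-> []//].
by case: ne; apply: refl_mulg_gen_eq.
Qed.

Lemma bruhat_lift y z s : bruhat y z ->
  bruhat (y ** gen s) z \/ bruhat (y ** gen s) (z ** gen s).
Proof.
elim=> [a|a b r refl_r lt ab IH]; first by right; apply: bruhat_refl.
case: (bruhat_lift_step s refl_r lt) => [h|h]; first by left; apply: bruhat_trans h ab.
by case: IH => h2; [left|right]; apply: bruhat_trans h h2.
Qed.

Lemma one_bruhat w : bruhat one w.
Proof.
have [ws [<- rw _]] := len_reduced_word w.
elim/last_ind: ws rw => [|ws s IH] rw; first exact: bruhat_refl.
apply: bruhat_trans (IH (reduced_rcons rw)) _; rewrite prodw_rcons.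
apply: bruhat_step1 (is_refl_gen s) _.
rewrite -prodw_rcons (len_prodw_reduced rw) (len_prodw_reduced (reduced_rcons rw)).
by rewrite size_rcons.
Qed.

Lemma bruhat_of_Des K w y : K \subset Des w -> inW K y -> bruhat y w.
Proof.
move=> /subsetP KD /inW_reduced_word [ys [<- rys ysK]].
elim/last_ind: ys rys ysK => [|ys s IH] rys; first by move=> _; apply: one_bruhat.
rewrite all_rcons prodw_rcons => /andP [sK ysK].
case: (bruhat_lift s (IH (reduced_rcons rys) ysK)) => // h.
by apply: bruhat_trans h (bruhat_mulg_gen _); rewrite -in_Des KD.
Qed.

Lemma finite_parab_len_bounded K n : (forall y, inW K y -> len y <= n) -> finite_parab gen K.
Proof.
move=> bounded; exists (map prodw (words_upto T n)) => y yK.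
have [ys [ey rys _]] := inW_reduced_word yK.
apply/List.in_map_iff; exists ys; split => //; apply/In_mem; apply: words_uptoP.
by rewrite -(len_prodw_reduced rys) ey bounded.
Qed.

Lemma Des_supp_w0 v : supp v \subset Des v ->
  finite_parab gen (supp v) /\ is_w0 gen (supp v) v.
Proof.
move=> vD; have bounded y : inW (supp v) y -> len y <= len v.
  by move=> yv; apply/bruhat_len/(bruhat_of_Des vD).
by split; [apply: finite_parab_len_bounded bounded | split; [apply: inW_supp|]].
Qed.

Lemma is_w0_Des_supp v : is_w0 gen (supp v) v -> supp v \subset Des v.
Proof.
move=> [vv longest]; apply/subsetP => s sv; rewrite in_Des.
have := longest (v ** gen s) (inW_mul vv (inW_gen sv)).
by case: (len_mulg_gen v s); lia.
Qed.

End CoxeterGroup.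

Local Open Scope ring_scope.

Theorem theorem3 (T : finType) (W : group) (gen : T -> W) :
  coxeter_system gen ->
  (forall u v : W, cox_le gen u v ->
     mobius gen u v =
       (if (supp gen u == supp gen v :\: Des gen (comp_up gen (supp gen u) v))
           || `[< u = v >]
        then (-1) ^+ (#|supp gen v| - #|supp gen u|)%N
        else 0))
  /\
  (forall v : W,
     mobius gen (gone W) v =
       (if `[< finite_parab gen (supp gen v) /\ is_w0 gen (supp gen v) v >]
        then (-1) ^+ #|supp gen v|
        else 0)).
Proof.
move=> cox; split => [u v le_uv|v].
  by rewrite (mobiusE cox le_uv) /mobius_formula asboolT.
rewrite (mobius1 cox); congr (if _ then _ else _); apply/idP/asboolP.
  exact: Des_supp_w0.
by case=> _; apply: is_w0_Des_supp.
Qed.
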